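(* Let $n\ge m$ and $\ell,N,p,q,K\in\mathbb{N}$. Let $\mathcal{S}=\{x\in\mathbb{R}^n : Fx\le\mathbf{1}_p\}$ be a C-polytope with $F\in\mathbb{R}^{p\times n}$ of full column rank and vertices $x_1,\dots,x_N$, and let $\mathscr{U}=\{u\in\mathbb{R}^m: Hu\le\mathbf{1}_q\}$ be a C-polytope with $H\in\mathbb{R}^{q\times m}$ of full column rank. Let $\delta^{(1)},\dots,\delta^{(K)}\in\mathbb{R}^\ell$ be given, with associated matrices $A(\delta^{(j)})\in\mathbb{R}^{n\times n}$, $B(\delta^{(j)})\in\mathbb{R}^{n\times m}$. For each $j$ set $G^{(j)}=\begin{bmatrix}H\\ FB(\delta^{(j)})\end{bmatrix}$ and $l^{(i,j)}=\begin{bmatrix}\mathbf{1}_q\\ \mathbf{1}_p-FA(\delta^{(j)})x_i\end{bmatrix}$. Let $$\mathcal{L}_{\delta_K}=\{(C_1,\dots,C_N,d_1,\dots,d_N): C_i\in\mathbb{R}^{m\times\ell},\ d_i\in\mathbb{R}^m,\ C_i\delta^{(j)}+d_i\in\mathscr{U},\ A(\delta^{(j)})x_i+B(\delta^{(j)})(C_i\delta^{(j)}+d_i)\in\mathcal{S}\ \forall i,\ \forall j\}.$$ If $\mathcal{L}_{\delta_K}\neq\emptyset$, then for every $i\in\{1,\dots,N\}$ and $j\in\{1,\dots,K\}$ there exist index sets $\mathcal{Q}\subset\{1,\dots,q\}$, $\mathcal{P}\subset\{1,\dots,p\}$ such that the submatrix $G^{(j)}_{\mathcal{Q}\cup\mathcal{P}}\in\mathbb{R}^{m\times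 m}$ (rows $\mathcal{Q}$ of $H$ and rows $\mathcal{P}$ of $FB(\delta^{(j)})$) is invertible and $$(H)_k\,(G^{(j)}_{\mathcal{Q}\cup\mathcal{P}})^{-1}\,l^{(i,j)}_{\mathcal{Q}\cup\mathcal{P}}\le 1\quad\forall k\in\{1,\dots,q\}\setminus\mathcal{Q},$$ $$(FB(\delta^{(j)}))_k\,(G^{(j)}_{\mathcal{Q}\cup\mathcal{P}})^{-1}\,l^{(i,j)}_{\mathcal{Q}\cup\mathcal{P}}\le 1-(FA(\delta^{(j)})x_i)_k\quad\forall k\in\{1,\dots,p\}\setminus\mathcal{P}.$$
   Context: A C-polytope is a convex bounded polyhedron containing the origin in its interior. $(P)_k$ denotes the $k$-th row of a matrix $P$; for an index set $\mathcal{I}$, $P_{\mathcal{I}}$ (resp. $y_{\mathcal{I}}$) denotes the submatrix (subvector) of rows (entries) indexed by $\mathcal{I}$. $\mathbf{1}_p$ is the all-ones vector in $\mathbb{R}^p$. *)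

From mathcomp Require Import all_boot all_order all_algebra.
Set Implicit Arguments. Unset Strict Implicit. Unset Printing Implicit Defensive.
Import Order.TTheory GRing.Theory Num.Theory.
Local Open Scope ring_scope.

Definition polyset (R : realFieldType) (p n : nat) (F : 'M[R]_(p, n))
  (x : 'cV[R]_n) : Prop := forall k : 'I_p, (F *m x) k 0 <= 1.

Definition bounded_set (R : realFieldType) (n : nat) (S : 'cV[R]_n -> Prop) : Prop :=
  exists M : R, forall x, S x -> forall k : 'I_n, `|x k 0| <= M.

Definition origin_interior (R : realFieldType) (n : nat) (S : 'cV[R]_n -> Prop) : Prop :=
  exists eps : R, 0 < eps /\ forall x : 'cV[R]_n, (forall k, `|x k 0| <= eps) -> S x.

Definition convex_set (R : realFieldType) (n : nat) (S : 'cV[R]_n -> Prop) : Prop :=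
  forall x y (t : R), S x -> S y -> 0 <= t <= 1 -> S (t *: x + (1 - t) *: y).

Definition C_polytope (R : realFieldType) (n : nat) (S : 'cV[R]_n -> Prop) : Prop :=
  [/\ convex_set S, bounded_set S & origin_interior S].

Definition is_vertex (R : realFieldType) (n : nat) (S : 'cV[R]_n -> Prop)
  (x : 'cV[R]_n) : Prop :=
  S x /\ forall y z (t : R), S y -> S z -> 0 < t < 1 ->
    x = t *: y + (1 - t) *: z -> y = z.

Definition L_deltaK_nonempty (R : realFieldType) (n m l p q N K : nat)
  (F : 'M[R]_(p, n)) (H : 'M[R]_(q, m))
  (A : 'cV[R]_l -> 'M[R]_n) (B : 'cV[R]_l -> 'M[R]_(n, m))
  (x : 'I_N -> 'cV[R]_n) (delta : 'I_K -> 'cV[R]_l) : Prop :=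
  exists (C : 'I_N -> 'M[R]_(m, l)) (d : 'I_N -> 'cV[R]_m),
    forall (i : 'I_N) (j : 'I_K),
      polyset H (C i *m delta j + d i) /\
      polyset F (A (delta j) *m x i + B (delta j) *m (C i *m delta j + d i)).

(* Rows of a matrix selected by an index set (in increasing enumeration order). *)
Definition rows_of (R : Type) (r c : nat) (I : {set 'I_r}) (M : 'M[R]_(r, c))
  : 'M[R]_(#|I|, c) :=
  \matrix_(k < #|I|, j < c) M (enum_val k) j.

Definition G_sub (R : realFieldType) (m p q : nat)
  (H : 'M[R]_(q, m)) (FB : 'M[R]_(p, m)) (Q : {set 'I_q}) (P : {set 'I_p})
  : 'M[R]_(#|Q| + #|P|, m) :=
  col_mx (rows_of Q H) (rows_of P FB).

Definition l_sub (R : realFieldType) (p q : nat)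
  (FAx : 'cV[R]_p) (Q : {set 'I_q}) (P : {set 'I_p}) : 'cV[R]_(#|Q| + #|P|) :=
  col_mx (rows_of Q (const_mx 1 : 'cV[R]_q)) (rows_of P (const_mx 1 - FAx)).

From mathcomp Require Import all_boot all_order all_algebra.
Set Implicit Arguments. Unset Strict Implicit. Unset Printing Implicit Defensive.
Import Order.TTheory GRing.Theory Num.Theory.
Local Open Scope ring_scope.

(* For fixed i and j, a member of L_{delta_K} yields a point
   u0 = C_i delta^(j) + d_i of the polyhedron
   { u | H u <= 1_q, F B u <= 1_p - F A x_i }, and the conclusion asks for a
   vertex of that polyhedron: a feasible u at which m linearly independent
   constraints Q u P are active, so that u = G^-1 l.  Since H has full column
   rank the polyhedron contains no line, and a vertex is reached from u0 by
   repeatedly moving along a direction annihilated by the active rows until a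
   new constraint becomes active (the ratio test of the simplex method); each
   move adds a row independent of the previous ones. *)

Section RowsOf.
Variables (R : fieldType) (r c : nat).
Implicit Types (A : 'M[R]_(r, c)) (S : {set 'I_r}).

Lemma row_mul_entry A d (B : 'M[R]_(c, d)) s j :
  (row s A *m B) 0 j = (A *m B) s j.
Proof. by rewrite -row_mul mxE. Qed.

Lemma row_rows_of S A k : row k (rows_of S A) = row (enum_val k) A.
Proof. by apply/rowP => j; rewrite !mxE. Qed.

Lemma rows_of_mul S A d (B : 'M[R]_(c, d)) :
  rows_of S A *m B = rows_of S (A *m B).
Proof.
by apply/matrixP => k j; rewrite !mxE; apply: eq_bigr => i _; rewrite mxE.
Qed.

Lemma row_sub_rows_of S A s : s \in S -> (row s A <= rows_of S A)%MS.
Proof. by move=> sS; rewrite -(enum_rankK_in sS sS) -row_rows_of row_sub. Qed.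

Lemma rows_ofS S S' A : S \subset S' -> (rows_of S A <= rows_of S' A)%MS.
Proof.
move=> sSS'; apply/row_subP => k; rewrite row_rows_of.
exact/row_sub_rows_of/(subsetP sSS')/enum_valP.
Qed.

Lemma rows_of_mul_eq0 S A (v : 'cV[R]_c) s :
  rows_of S A *m v = 0 -> s \in S -> (A *m v) s 0 = 0.
Proof.
move=> Av0 /(row_sub_rows_of A) /submxP [D sD].
by rewrite -row_mul_entry sD -mulmxA Av0 mulmx0 mxE.
Qed.

Lemma row_free_rows_ofU1 S A s (v : 'cV[R]_c) :
  row_free (rows_of S A) -> rows_of S A *m v = 0 -> (A *m v) s 0 != 0 ->
  row_free (rows_of (s |: S) A).
Proof.
move=> freeS Av0 Avs; have sS : s \notin S.
  by apply: contra Avs => /(rows_of_mul_eq0 Av0) ->.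
have ltS : (rows_of S A < rows_of (s |: S) A)%MS.
  rewrite ltmxE rows_ofS ?subsetUr //=; apply: contra Avs => subS.
  have /submxP [D sD] := submx_trans (row_sub_rows_of A (setU11 s S)) subS.
  by rewrite -row_mul_entry sD -mulmxA Av0 mulmx0 mxE.
rewrite /row_free eqn_leq rank_leq_row /=; apply: leq_trans (rank_ltmx ltS).
by rewrite (eqP freeS) cardsU1 sS.
Qed.

End RowsOf.

Lemma exists_kernel_vector (R : fieldType) k m (A : 'M[R]_(k, m)) :
  (\rank A < m)%N -> exists2 v : 'cV[R]_m, v != 0 & A *m v = 0.
Proof.
move=> rkA; have : kermx A^T != 0.
  by rewrite -mxrank_eq0 mxrank_ker mxrank_tr subn_eq0 -ltnNge.
case/rowV0Pn => w /sub_kermxP wA w0; exists w^T; first by rewrite trmx_eq0.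
by rewrite -[A]trmxK -trmx_mul wA trmx0.
Qed.

Lemma mulmx_castmx (R : ringType) m1 m2 n k (e : m1 = m2)
    (A : 'M[R]_(m1, n)) (B : 'M[R]_(n, k)) :
  castmx (e, erefl n) A *m B = castmx (e, erefl k) (A *m B).
Proof. by case: m2 / e; rewrite !castmx_id. Qed.

Section BasicFeasibleSolution.
Variables (R : realFieldType) (r m : nat) (M : 'M[R]_(r, m)) (b : 'cV[R]_r).

Definition feasible (u : 'cV[R]_m) := forall k, (M *m u) k 0 <= b k 0.

Definition tight_on (S : {set 'I_r}) (u : 'cV[R]_m) :=
  {in S, forall s, (M *m u) s 0 = b s 0}.

Definition basic_set (S : {set 'I_r}) :=
  row_free (rows_of S M) /\ exists2 u, feasible u & tight_on S u.

Lemma mulmx_line_entry (u v : 'cV[R]_m) t k :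
  (M *m (u + t *: v)) k 0 = (M *m u) k 0 + t * (M *m v) k 0.
Proof. by rewrite mulmxDr -scalemxAr !mxE. Qed.

Lemma ratio_test u v : feasible u -> (exists k, 0 < (M *m v) k 0) ->
  exists t s, [/\ 0 < (M *m v) s 0, feasible (u + t *: v)
                & (M *m (u + t *: v)) s 0 = b s 0].
Proof.
move=> feas_u [k0 Mvk0].
pose ratio k := (b k 0 - (M *m u) k 0) / (M *m v) k 0.
case: (arg_minP (P := fun k => 0 < (M *m v) k 0) ratio Mvk0).
move=> s Mvs ratio_min; set t := ratio s.
exists t, s; split => // [k|]; rewrite mulmx_line_entry; last first.
  by rewrite /t /ratio divfK ?gt_eqF // addrC subrK.
have [Mvk | Mvk] := ltP 0 ((M *m v) k 0).
  by rewrite addrC -lerBrDr -ler_pdivlMr // ratio_min.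
have t_ge0 : 0 <= t by rewrite /t /ratio divr_ge0 ?subr_ge0 ?feas_u ?ltW.
by rewrite -[X in _ <= X]addr0 lerD ?feas_u ?mulr_ge0_le0.
Qed.

Hypothesis M_full : row_full M.

Lemma exists_ascent_direction (S : {set 'I_r}) : (#|S| < m)%N ->
  exists v : 'cV[R]_m, rows_of S M *m v = 0 /\ exists k, 0 < (M *m v) k 0.
Proof.
move=> ltSm; have [|v v0 Sv0] := @exists_kernel_vector _ _ _ (rows_of S M).
  exact: leq_ltn_trans (rank_leq_row _) ltSm.
have /existsP [k Mvk] : [exists k, (M *m v) k 0 != 0].
  apply: contraR v0 => /existsPn Mv0.
  apply/eqP/(row_full_inj M_full); rewrite mulmx0; apply/colP => k.
  by rewrite [RHS]mxE; apply/eqP/negPn; exact: Mv0.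
have [Mvk_gt0 | Mvk_lt0 | Mvk0] := ltgtP 0 ((M *m v) k 0).
- by exists v; split; last exists k.
- exists (- v); rewrite mulmxN Sv0 oppr0; split => //.
  by exists k; rewrite mulmxN mxE oppr_gt0.
- by rewrite -Mvk0 eqxx in Mvk.
Qed.

Lemma basic_set_grow S : basic_set S -> (#|S| < m)%N ->
  exists2 S', basic_set S' & #|S'| = #|S|.+1.
Proof.
move=> [freeS [u feas_u tight_u]] ltSm.
have [v [Sv0 Mv_pos]] := exists_ascent_direction ltSm.
have [t [s [Mvs feas_u' tight_s]]] := ratio_test feas_u Mv_pos.
have sS : s \notin S.
  by apply: contraL Mvs => /(rows_of_mul_eq0 Sv0) ->; rewrite ltxx.
exists (s |: S); last by rewrite cardsU1 sS.
split; first exact: row_free_rows_ofU1 freeS Sv0 (lt0r_neq0 Mvs).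
exists (u + t *: v) => // s'; rewrite in_setU1 => /predU1P [-> // | s'S].
by rewrite mulmx_line_entry (rows_of_mul_eq0 Sv0) // mulr0 addr0 tight_u.
Qed.

Lemma exists_basic_set u0 : feasible u0 -> exists2 S, basic_set S & #|S| = m.
Proof.
move=> feas_u0.
suff grow k : (k <= m)%N -> exists2 S, basic_set S & #|S| = k by exact: grow.
elim: k => [_ | k IHk ltkm].
  exists set0; last exact: cards0.
  split; last by exists u0 => // s; rewrite in_set0.
  rewrite /row_free eqn_leq rank_leq_row /=.
  exact: leq_trans (eq_leq (cards0 _)) (leq0n _).
have [S basicS cardS] := IHk (ltnW ltkm).
have [|S' basicS' cardS'] := basic_set_grow basicS; first by rewrite cardS.
by exists S'; rewrite // cardS' cardS.
Qed.

End BasicFeasibleSolution.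

Section StackedRows.
Variables (R : realFieldType) (q p : nat) (S : {set 'I_(q + p)}).

Definition usub_set : {set 'I_q} := [set k | lshift p k \in S].
Definition dsub_set : {set 'I_p} := [set k | rshift q k \in S].

Lemma card_usub_dsub_set : (#|usub_set| + #|dsub_set|)%N = #|S|.
Proof.
rewrite -!sum1_card big_split_ord /=.
by congr (_ + _)%N; apply: eq_bigl => k; rewrite inE.
Qed.

Lemma G_sub_mul c d (A1 : 'M[R]_(q, c)) (A2 : 'M[R]_(p, c)) (B : 'M[R]_(c, d))
    (Q : {set 'I_q}) (P : {set 'I_p}) :
  G_sub A1 A2 Q P *m B = G_sub (A1 *m B) (A2 *m B) Q P.
Proof. by rewrite mul_col_mx !rows_of_mul. Qed.

Lemma G_sub_eqmx c (A1 : 'M[R]_(q, c)) (A2 : 'M[R]_(p, c)) :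
  (G_sub A1 A2 usub_set dsub_set :=: rows_of S (col_mx A1 A2))%MS.
Proof.
apply/eqmxP/andP; split; apply/row_subP => k.
  rewrite -(splitK k); case: (split k) => k' /=.
    rewrite rowKu row_rows_of -(rowKu _ _ A2).
    by apply: row_sub_rows_of; have := enum_valP k'; rewrite inE.
  rewrite rowKd row_rows_of -(rowKd _ A1).
  by apply: row_sub_rows_of; have := enum_valP k'; rewrite inE.
rewrite row_rows_of; have := enum_valP k; rewrite -(splitK (enum_val k)).
case: (split _) => k' /= k'S.
  have k'Q : k' \in usub_set by rewrite inE.
  rewrite rowKu -(enum_rankK_in k'Q k'Q) -row_rows_of.
  by rewrite -(rowKu _ _ (rows_of dsub_set A2)) row_sub.
have k'P : k' \in dsub_set by rewrite inE.
rewrite rowKd -(enum_rankK_in k'P k'P) -row_rows_of.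
by rewrite -(rowKd _ (rows_of usub_set A1)) row_sub.
Qed.

Lemma G_sub_eq_on (Y1 Z1 : 'cV[R]_q) (Y2 Z2 : 'cV[R]_p) :
  {in S, forall s, col_mx Y1 Y2 s 0 = col_mx Z1 Z2 s 0} ->
  G_sub Y1 Y2 usub_set dsub_set = G_sub Z1 Z2 usub_set dsub_set.
Proof.
move=> eqS; apply/colP => k; rewrite -(splitK k); case: (split k) => k' /=.
  rewrite !col_mxEu !mxE; have := enum_valP k'; rewrite inE => /eqS.
  by rewrite !col_mxEu.
rewrite !col_mxEd !mxE; have := enum_valP k'; rewrite inE => /eqS.
by rewrite !col_mxEd.
Qed.

End StackedRows.

Lemma feasible_col_mx (R : realFieldType) q p m (M1 : 'M[R]_(q, m))
    (M2 : 'M[R]_(p, m)) (b1 : 'cV[R]_q) (b2 : 'cV[R]_p) (u : 'cV[R]_m) :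
  feasible (col_mx M1 M2) (col_mx b1 b2) u <->
  feasible M1 b1 u /\ feasible M2 b2 u.
Proof.
rewrite /feasible mul_col_mx; split => [feas | [feas1 feas2] k].
  split=> k; [have := feas (lshift p k) | have := feas (rshift q k)].
    by rewrite !col_mxEu.
  by rewrite !col_mxEd.
by rewrite -(splitK k); case: (split k) => k' /=; rewrite ?col_mxEu ?col_mxEd.
Qed.

Lemma exists_invertible_G_sub (R : realFieldType) q p m (M1 : 'M[R]_(q, m))
    (M2 : 'M[R]_(p, m)) (b1 : 'cV[R]_q) (b2 : 'cV[R]_p) (u0 : 'cV[R]_m) :
  row_full M1 -> feasible M1 b1 u0 -> feasible M2 b2 u0 ->
  exists (Q : {set 'I_q}) (P : {set 'I_p}) (e : (#|Q| + #|P|)%N = m),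
    let G := castmx (e, erefl m) (G_sub M1 M2 Q P) in
    let u := invmx G *m castmx (e, erefl 1%N) (G_sub b1 b2 Q P) in
    [/\ G \in unitmx, feasible M1 b1 u & feasible M2 b2 u].
Proof.
move=> fullM1 feas1 feas2; have fullM : row_full (col_mx M1 M2).
  rewrite /row_full eqn_leq rank_leq_col -addsmxE /=.
  by apply: leq_trans (mxrankS (addsmxSl M1 M2)); rewrite (eqP fullM1).
have [|S [freeS [u feas_u tight_u]] cardS] :=
  @exists_basic_set _ _ _ _ (col_mx b1 b2) fullM u0.
  exact/feasible_col_mx.
have e : (#|usub_set S| + #|dsub_set S|)%N = m.
  by rewrite card_usub_dsub_set cardS.
exists (usub_set S), (dsub_set S), e => G u'.
have unitG : G \in unitmx.
  rewrite -row_free_unit row_free_castmx /row_free G_sub_eqmx (eqP freeS).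
  by rewrite card_usub_dsub_set.
have Gu :
    G *m u = castmx (e, erefl 1%N) (G_sub b1 b2 (usub_set S) (dsub_set S)).
  rewrite mulmx_castmx G_sub_mul (G_sub_eq_on (Z1 := b1) (Z2 := b2)) //.
  by move=> s /tight_u; rewrite mul_col_mx.
have -> : u' = u by rewrite /u' -Gu mulKmx.
by have /feasible_col_mx [] := feas_u.
Qed.

Lemma polyset_feasible (R : realFieldType) p n (F : 'M[R]_(p, n))
    (y : 'cV[R]_n) :
  polyset F y -> feasible F (const_mx 1) y.
Proof. by move=> Fy k; rewrite [const_mx _ _ _]mxE; apply: Fy. Qed.

Lemma polyset_affine_feasible (R : realFieldType) p n m (F : 'M[R]_(p, n))
    (A : 'M[R]_n) (B : 'M[R]_(n, m)) (y : 'cV[R]_n) (u : 'cV[R]_m) :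
  polyset F (A *m y + B *m u) -> feasible (F *m B) (const_mx 1 - F *m A *m y) u.
Proof.
by move=> Fyu k; have := Fyu k; rewrite mulmxDr !mulmxA !mxE lerBrDl.
Qed.

Theorem proposition1 (R : realFieldType) (n m l N p q K : nat)
  (F : 'M[R]_(p, n)) (H : 'M[R]_(q, m)) (x : 'I_N -> 'cV[R]_n)
  (A : 'cV[R]_l -> 'M[R]_n) (B : 'cV[R]_l -> 'M[R]_(n, m))
  (delta : 'I_K -> 'cV[R]_l) :
  (m <= n)%N ->
  C_polytope (polyset F) -> \rank F = n ->
  injective x -> (forall y, is_vertex (polyset F) y <-> exists i, y = x i) ->
  C_polytope (polyset H) -> \rank H = m ->
  L_deltaK_nonempty F H A B x delta ->
  forall (i : 'I_N) (j : 'I_K),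
    exists (Q : {set 'I_q}) (P : {set 'I_p}) (e : (#|Q| + #|P|)%N = m),
      let FB := F *m B (delta j) in
      let FAx := F *m A (delta j) *m x i in
      let G := castmx (e, erefl m) (G_sub H FB Q P) in
      let u := invmx G *m castmx (e, erefl 1%N) (l_sub FAx Q P) in
      [/\ G \in unitmx,
          forall k : 'I_q, k \notin Q -> (row k H *m u) 0 0 <= 1
        & forall k : 'I_p, k \notin P -> (row k FB *m u) 0 0 <= 1 - FAx k 0].
Proof.
move=> _ _ _ _ _ _ rankH [C [d feasL]] i j.
have [feasH feasF] := feasL i j.
have fullH : row_full H by rewrite /row_full rankH.
have [Q [P [e [unitG feasHu feasFBu]]]] :=
  exists_invertible_G_sub fullH (polyset_feasible feasH)
    (polyset_affine_feasible feasF).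
exists Q, P, e; split => // k _; rewrite row_mul_entry.
  by have := feasHu k; rewrite [const_mx _ _ _]mxE.
by have := feasFBu k; rewrite !mxE.
Qed.
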